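(* Let $R$ be a commutative ring with identity and $M$ a non-zero comultiplication $R$-module. Then the large sum graph $G'(M)$ is a null graph (has no vertices) if and only if $M$ is a cocyclic module.
   Context: An $R$-module $M$ is a comultiplication module if for every submodule $N$ of $M$ there is an ideal $I$ of $R$ with $N=\mathrm{Ann}_M(I)$. A submodule $N$ of $M$ is large in $M$ if $N\cap L\neq 0$ for every non-zero submodule $L$ of $M$. $\mathrm{Soc}(M)$ is the sum of all minimal submodules of $M$. $M$ is cocyclic if $\mathrm{Soc}(M)$ is a simple submodule of $M$ that is large in $M$. The large sum graph $G'(M)$ has as vertex set the set of all non-zero non-large submodules of $M$, and two distinct vertices $N,K$ are adjacent iff $N+K$ is a non-large submodule of $M$. *)

From HB Require Import structures.
From mathcomp Require Import all_boot all_order all_algebra.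
Set Implicit Arguments. Unset Strict Implicit. Unset Printing Implicit Defensive.
Import GRing.Theory.
Local Open Scope ring_scope.

(* Subsets of a module are predicates M -> Prop (modules may be infinite). *)
Definition is_submodule (R : comNzRingType) (M : lmodType R) (N : M -> Prop) : Prop :=
  N 0 /\ (forall x y, N x -> N y -> N (x + y)) /\ (forall (r : R) x, N x -> N (r *: x)).

Definition is_ideal (R : comNzRingType) (I : R -> Prop) : Prop :=
  I 0 /\ (forall a b, I a -> I b -> I (a + b)) /\ (forall r a, I a -> I (r * a)).

Definition annM (R : comNzRingType) (M : lmodType R) (I : R -> Prop) : M -> Prop :=
  fun m => forall r, I r -> r *: m = 0.

Definition comultiplication_module (R : comNzRingType) (M : lmodType R) : Prop :=
  forall N : M -> Prop, is_submodule N ->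
    exists I : R -> Prop, is_ideal I /\ (forall m, N m <-> annM I m).

Definition nonzero_sub (R : comNzRingType) (M : lmodType R) (N : M -> Prop) : Prop :=
  exists x, N x /\ x <> 0.

Definition large (R : comNzRingType) (M : lmodType R) (N : M -> Prop) : Prop :=
  forall L : M -> Prop, is_submodule L -> nonzero_sub L ->
    exists x, N x /\ L x /\ x <> 0.

Definition minimal_sub (R : comNzRingType) (M : lmodType R) (N : M -> Prop) : Prop :=
  is_submodule N /\ nonzero_sub N /\
  forall K : M -> Prop, is_submodule K -> (forall x, K x -> N x) ->
    (forall x, K x -> x = 0) \/ (forall x, N x -> K x).

(* Soc(M): sum of all minimal submodules = finite sums of elements of minimal submodules *)
Definition socle (R : comNzRingType) (M : lmodType R) : M -> Prop :=
  fun m => exists s : seq M,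
    (forall y, y \in s -> exists N, minimal_sub N /\ N y) /\ m = \sum_(y <- s) y.

Definition cocyclic (R : comNzRingType) (M : lmodType R) : Prop :=
  minimal_sub (@socle R M) /\ large (@socle R M).

(* vertices of the large sum graph G'(M): non-zero non-large submodules *)
Definition lsg_vertex (R : comNzRingType) (M : lmodType R) (N : M -> Prop) : Prop :=
  is_submodule N /\ nonzero_sub N /\ ~ large N.

Definition lsg_adj (R : comNzRingType) (M : lmodType R) (N K : M -> Prop) : Prop :=
  lsg_vertex N /\ lsg_vertex K /\ N <> K /\
  ~ large (fun m => exists a b, N a /\ K b /\ m = a + b).

Definition lsg_null (R : comNzRingType) (M : lmodType R) : Prop :=
  forall N : M -> Prop, ~ lsg_vertex N.

From mathcomp Require Import all_boot all_order all_algebra.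
From Stdlib Require Import Classical FunctionalExtensionality PropExtensionality.
Set Implicit Arguments. Unset Strict Implicit. Unset Printing Implicit Defensive.
Import GRing.Theory.
Local Open Scope ring_scope.

(* G'(M) has no vertices exactly when M is uniform (every non-zero submodule
   is large), and a cocyclic module is uniform since its simple large socle
   lies in every non-zero submodule.  Conversely, in a uniform module the
   zero divisors on M form a proper ideal J.  For x <> 0, comultiplication
   writes Jx as Ann_M(I); some i in I has ix <> 0 (otherwise x lies in Jx and
   1 in J), and y := ix is killed by J.  Comultiplication applied to the
   submodules Rw, w in Ry non-zero, then shows that Ry is simple; being large,
   it is the socle. *)

Section Comultiplication.

Variables (R : comNzRingType) (M : lmodType R).
Implicit Types (N K L : M -> Prop) (x y z w : M).

Definition uniform : Prop :=
  forall N, is_submodule N -> nonzero_sub N -> large N.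

Definition cyclic_sub y : M -> Prop := fun m => exists s : R, m = s *: y.

Definition zero_divisor (r : R) : Prop := exists z : M, z <> 0 /\ r *: z = 0.

Lemma submoduleI N K :
  is_submodule N -> is_submodule K -> is_submodule (fun m => N m /\ K m).
Proof.
move=> [N0 [ND NZ]] [K0 [KD KZ]]; split=> //; split.
  by move=> x y [? ?] [? ?]; split; [apply: ND | apply: KD].
by move=> r x [? ?]; split; [apply: NZ | apply: KZ].
Qed.

Lemma cyclic_submodule y : is_submodule (cyclic_sub y).
Proof.
split; first by exists 0; rewrite scale0r.
split; first by move=> _ _ [s ->] [t ->]; exists (s + t); rewrite scalerDl.
by move=> r _ [s ->]; exists (r * s); rewrite scalerA.
Qed.

Lemma cyclic_sub_id y : cyclic_sub y y.
Proof. by exists 1; rewrite scale1r. Qed.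

Lemma cyclic_sub_nonzero y : y <> 0 -> nonzero_sub (cyclic_sub y).
Proof. by move=> y0; exists y; split=> //; apply: cyclic_sub_id. Qed.

Lemma cyclic_sub_min K y :
  is_submodule K -> K y -> forall m, cyclic_sub y m -> K m.
Proof. by move=> [_ [_ KZ]] Ky _ [s ->]; apply: KZ. Qed.

Lemma large_sub N K : (forall m, N m -> K m) -> large N -> large K.
Proof.
move=> NK Nl L Ls Lnz; have [x [Nx [Lx x0]]] := Nl L Ls Lnz.
by exists x; split=> //; apply: NK.
Qed.

Lemma minimal_sub_meet N K :
  minimal_sub N -> is_submodule K -> (exists x, N x /\ K x /\ x <> 0) ->
  forall m, N m -> K m.
Proof.
move=> [Ns [_ Nmin]] Ks [x [Nx [Kx x0]]].
case: (Nmin _ (submoduleI Ns Ks)) => [y [] // | NK | NK].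
- by case: x0; apply: NK.
- by move=> m /NK [].
Qed.

Lemma lsg_nullP : lsg_null M <-> uniform.
Proof.
split=> [hn N Ns Nnz | hu N [Ns [Nnz Nnl]]]; last exact/Nnl/hu.
by apply: NNPP => Nnl; apply: (hn N).
Qed.

Lemma cocyclic_uniform : cocyclic M -> uniform.
Proof.
move=> [Smin Sl] N Ns Nnz; apply: (large_sub _ Sl).
by apply: (minimal_sub_meet Smin Ns); have [x [? [? ?]]] := Sl N Ns Nnz; exists x.
Qed.

Lemma socle_large_minimal N : minimal_sub N -> large N -> @socle R M = N.
Proof.
move=> Nmin Nl; have [Ns _] := Nmin.
apply: functional_extensionality => m; apply: propositional_extensionality.
split=> [[s [hs ->]] | Nm]; last first.
  exists [:: m]; split; last by rewrite big_seq1.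
  by move=> z; rewrite inE => /eqP ->; exists N.
have [N0 [ND _]] := Ns.
rewrite big_seq; apply: (big_ind N) => // a /hs [N' [N'min N'a]].
have [N's [N'nz _]] := N'min.
apply: minimal_sub_meet N'min Ns _ _ N'a.
by have [x [? [? ?]]] := Nl N' N's N'nz; exists x.
Qed.

Lemma zero_divisor1 : ~ zero_divisor 1.
Proof. by move=> [z [z0]]; rewrite scale1r. Qed.

Lemma zero_divisorMl r a : zero_divisor a -> zero_divisor (r * a).
Proof. by move=> [z [z0 az]]; exists z; split=> //; rewrite -scalerA az scaler0. Qed.

Lemma uniform_zero_divisorD a b :
  uniform -> zero_divisor a -> zero_divisor b -> zero_divisor (a + b).
Proof.
move=> hu [z [z0 az]] [w [w0 bw]].
have [u [[c ->] [[d ud] u0]]] := hu _ (cyclic_submodule z) (cyclic_sub_nonzero z0)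
  _ (cyclic_submodule w) (cyclic_sub_nonzero w0).
exists (c *: z); split=> //.
rewrite scalerDl scalerA mulrC -scalerA az scaler0 add0r.
by rewrite ud scalerA mulrC -scalerA bw scaler0.
Qed.

Hypothesis comult : comultiplication_module M.

Lemma exists_zero_divisor_annihilated x :
  uniform -> x <> 0 ->
  exists y, y <> 0 /\ forall b, zero_divisor b -> b *: y = 0.
Proof.
move=> hu x0; pose Jx m := exists b, zero_divisor b /\ m = b *: x.
have Jxs : is_submodule Jx.
  split; first by exists 0; rewrite scale0r; split=> //; exists x; rewrite scale0r.
  split=> [_ _ [a [Ja ->]] [b [Jb ->]] | r _ [a [Ja ->]]].
    by exists (a + b); rewrite scalerDl; split=> //; apply: uniform_zero_divisorD.
  by exists (r * a); rewrite scalerA; split=> //; apply: zero_divisorMl.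
have [I [_ eI]] := comult Jxs.
have [i [Ii ix0]] : exists i, I i /\ i *: x <> 0.
  apply: NNPP => hno.
  have [b [Jb xb]] : Jx x.
    by apply/eI => i Ii; apply: NNPP => ix0; apply: hno; exists i.
  apply: zero_divisor1; rewrite -(subrK b 1).
  apply: uniform_zero_divisorD => //; exists x; split=> //.
  by rewrite scalerBl scale1r -xb subrr.
exists (i *: x); split=> // b Jb.
by rewrite scalerA mulrC -scalerA; apply: ((eI _).1 _ i Ii); exists b.
Qed.

Lemma cyclic_sub_minimal y :
  y <> 0 -> (forall b, zero_divisor b -> b *: y = 0) -> minimal_sub (cyclic_sub y).
Proof.
move=> y0 Jy; split; first exact: cyclic_submodule.
split; first exact: cyclic_sub_nonzero.
move=> K Ks Ky; case: (classic (exists w, K w /\ w <> 0)) => [[w [Kw w0]] | hno].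
  right; apply: cyclic_sub_min => //.
  have [I [_ eI]] := comult (cyclic_submodule w).
  apply: (cyclic_sub_min Ks Kw); apply: (eI y).2 => i Ii; apply: Jy.
  by exists w; split=> //; apply: ((eI _).1 _ i Ii); apply: cyclic_sub_id.
by left=> m Km; apply: NNPP => m0; apply: hno; exists m.
Qed.

End Comultiplication.

Theorem proposition2p4 (R : comNzRingType) (M : lmodType R) :
  (exists x : M, x <> 0%R) -> @comultiplication_module R M ->
  (@lsg_null R M <-> @cocyclic R M).
Proof.
move=> [x x0] comult; rewrite lsg_nullP.
split=> [hu | /cocyclic_uniform //].
have [y [y0 Jy]] := exists_zero_divisor_annihilated comult hu x0.
have ymin := cyclic_sub_minimal comult y0 Jy.
have yl : large (cyclic_sub y).
  by apply: hu; [apply: cyclic_submodule | apply: cyclic_sub_nonzero].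
by rewrite /cocyclic (socle_large_minimal ymin yl).
Qed.
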